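(* There is no non-trivial subfunctor $F$ of the identity functor on the category of abelian groups such that $F(A)$ is torsion-free for every abelian group $A$.
   Context: A subfunctor $F$ of the identity functor on abelian groups assigns to each abelian group $A$ a subgroup $F(A)\subseteq A$ with $f(F(A))\subseteq F(A')$ for every homomorphism $f:A\to A'$; it is non-trivial if $F(A)\neq 0$ for some $A$. *)

From HB Require Import structures.
From mathcomp Require Import all_boot all_order all_algebra.
Set Implicit Arguments. Unset Strict Implicit. Unset Printing Implicit Defensive.
Import GRing.Theory.
Local Open Scope ring_scope.

(* Abelian groups are modelled as [zmodType]s, homomorphisms as
   [{additive A -> B}]. *)
Definition is_subgroup (A : zmodType) (S : A -> Prop) : Prop :=
  S 0 /\ (forall x y, S x -> S y -> S (x - y)).

Definition is_id_subfunctor (F : forall A : zmodType, A -> Prop) : Prop :=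
  (forall A : zmodType, is_subgroup (F A)) /\
  (forall (A B : zmodType) (f : {additive A -> B}) (x : A),
      F A x -> F B (f x)).

Definition nontrivial_subfunctor (F : forall A : zmodType, A -> Prop) : Prop :=
  exists (A : zmodType) (x : A), F A x /\ x <> 0.

Definition torsion_free_sub (A : zmodType) (S : A -> Prop) : Prop :=
  forall (x : A) (n : nat), S x -> x *+ n.+1 = 0 -> x = 0.

(* If x is a nonzero element of F(A), then F(A) torsion-free forces x to have
   infinite order. Its image in A/<2x> still lies in F, and has order at most 2,
   so it vanishes: x = 2kx for some integer k. Then (1 - 2k)x = 0 with 1 - 2k
   odd, hence nonzero, contradicting torsion-freeness of F(A). *)
From HB Require Import structures.
From mathcomp Require Import all_boot all_order all_algebra.
From mathcomp Require Import boolp generic_quotient ring_quotient zify.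

Set Implicit Arguments.
Unset Strict Implicit.
Unset Printing Implicit Defensive.

Import GRing.Theory.
Local Open Scope ring_scope.
Local Open Scope quotient_scope.

Section Multiples.
Variables (A : zmodType) (y : A).

Definition multiples : {pred A} := fun a => `[< exists k : int, a = y *~ k >].

Lemma multiples_zmod_closed : zmod_closed multiples.
Proof.
split=> [|a b /asboolP[k ->] /asboolP[l ->]]; apply/asboolP.
  by exists 0; rewrite mulr0z.
by exists (k - l); rewrite mulrzBr.
Qed.

HB.instance Definition _ := GRing.isZmodClosed.Build A multiples
  multiples_zmod_closed.

Lemma pi_multiples_eq0 (a : A) :
  (\pi_(Quotient.quot multiples) a == 0) = (a \in multiples).
Proof. by rewrite -(subr0 a) Quotient.idealrBE subr0 raddf0. Qed.

Lemma pi_multiples_gen : \pi_(Quotient.quot multiples) y = 0.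
Proof. by apply/eqP; rewrite pi_multiples_eq0; apply/asboolP; exists 1. Qed.

End Multiples.

Lemma torsion_free_mulrz (A : zmodType) (S : A -> Prop) (x : A) (k : int) :
  torsion_free_sub S -> S x -> k != 0 -> x *~ k = 0 -> x = 0.
Proof.
move=> tfS Sx; case: k => [[|n]|n] // _; first exact: tfS.
by rewrite NegzE mulrNz => /eqP; rewrite oppr_eq0 => /eqP; apply: tfS.
Qed.

Lemma torsion_free_id_subfunctor_eq0 (F : forall A : zmodType, A -> Prop) :
  is_id_subfunctor F -> (forall A : zmodType, torsion_free_sub (F A)) ->
  forall (A : zmodType) (x : A), F A x -> x = 0.
Proof.
move=> [_ F_hom] tfF A x Fx.
have Fpix := F_hom _ _ \pi_(Quotient.quot (multiples (x *+ 2))) x Fx.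
have /asboolP[k xE] : x \in multiples (x *+ 2).
  by rewrite -pi_multiples_eq0 (tfF _ _ 1 Fpix) // -raddfMn /= pi_multiples_gen.
apply: (torsion_free_mulrz (k := 1 - 2 * k) (tfF A) Fx); first lia.
by rewrite mulrzBr mulr1z mulrzA -[x *~ 2]/(x *+ 2) -xE subrr.
Qed.

Theorem corollary3p18 :
  ~ exists F : forall A : zmodType, A -> Prop,
      is_id_subfunctor F /\ nontrivial_subfunctor F /\
      (forall A : zmodType, torsion_free_sub (F A)).
Proof.
move=> [F [subF [[A [x [Fx x_neq0]]] tfF]]].
exact/x_neq0/(torsion_free_id_subfunctor_eq0 subF tfF Fx).
Qed.
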